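(* Let $n\ge 2$ and let $H=\langle h\rangle$ be a cyclic group of order $n$. Let $G=H\times H$, and regard the first factor $H\times\{e\}$ as ''$H$'' and the second factor $\{e\}\times H$ as ''$P$'' (so $P=\langle g\rangle$ with $g=(e,h)$ and $m=n$). Let $a,b\in\{0,1,\dots,n-1\}$ and put $\ell=|a-b|$. Define $$R=\{(h^a,x): x\in H,\ x\neq h^b\}\ \cup\ \{(x,h^b): x\in H,\ x\neq h^b\}\subseteq G .$$ If $\ell\neq 0$, then $R$ is an $\ell$-$(n,n,2n-2,n-2,n,n-2,2,1)$-partial direct product difference set in $G$ relative to the two factors. If $\ell=0$, then $R$ is an $(n,n,2n-2,n-2,n-2,2)$-direct product difference set in $G$ relative to the two factors.
   Context: Group ring notation: for a finite group $G$ and a subset $X\subseteq G$, write $X$ also for the element $\sum_{x\in X}x$ of the integral group ring $\mathbb Z[G]$, and $X^{(-1)}=\sum_{x\in X}x^{-1}$. Let $G=H\times P$ with $H=\langle h\rangle$ cyclic of order $n$ and $P=\langle g\rangle$ cyclic of order $m$, identifying $H$ with $H\times\{e_P\}$ and $P$ with $\{e_H\}\times P$; let $e$ be the identity of $G$. (1) Partial direct product difference set (PDPDS): let $\ell$ be an integer with $h^\ell\neq e_H$. A subset $R\subseteq G$ with $|R|=k$ is an $\ell$-$(n,m,k,\lambda_1,\lambda_2,\lambda_3,\mu_1,\mu_2)$-PDPDS in $G$ relative to $H$ and $P$ if in $\mathbb Z[G]$ $$RR^{(-1)}=(k-\lambda_1-\lambda_2+\mu_1)e+(\lambda_1-\mu_1)H+(\lambda_2-\mu_1)P+\mu_1G+(\lambda_3-\lambda_1)(h^\ell+h^{n-\ell})+(\mu_2-\mu_1)(h^\ell+h^{n-\ell})(g+g^2+\dots+g^{m-1}).$$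 (When $h^\ell\ne h^{n-\ell}$ this says: the quotients $r_1r_2^{-1}$, $r_1\neq r_2\in R$, represent every element of $H\setminus\{h^\ell,h^{n-\ell},e_H\}$ exactly $\lambda_1$ times, every non-identity element of $P$ exactly $\lambda_2$ times, each of $h^\ell,h^{n-\ell}$ exactly $\lambda_3$ times, every element of $(H\setminus\{h^\ell,h^{n-\ell},e_H\})\times(P\setminus\{e_P\})$ exactly $\mu_1$ times, and every element of $\{h^\ell,h^{n-\ell}\}\times(P\setminus\{e_P\})$ exactly $\mu_2$ times.) (2) Direct product difference set (DPDS): a subset $R\subseteq G$ with $|R|=k$ is an $(n,m,k,\lambda_1,\lambda_2,\mu)$-DPDS in $G$ relative to $H$ and $P$ if the quotients $r_1r_2^{-1}$, $r_1\ne r_2\in R$, represent every non-identity element of $H$ exactly $\lambda_1$ times, every non-identity element of $P$ exactly $\lambda_2$ times, and every element of $(H\setminus\{e_H\})\times(P\setminus\{e_P\})$ exactly $\mu$ times (and no other elements). *)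

From HB Require Import structures.
From mathcomp Require Import all_boot all_order all_algebra all_fingroup.
Set Implicit Arguments.
Unset Strict Implicit.
Unset Printing Implicit Defensive.
Import GRing.Theory.
Local Open Scope group_scope.

(* G = H x P is modelled inside the external direct product group gT1 * gT2,
   with H = <[h]> x 1 and P = 1 x <[g]>. *)

Section Defs.
Variables gT1 gT2 : finGroupType.

(* coefficient of z in R R^(-1) in the integral group ring *)
Definition rrinv_coef (R : {set gT1 * gT2}) (z : gT1 * gT2) : nat :=
  #|[set p in setX R R | p.1 * p.2^-1 == z]|.

Definition diff_count (R : {set gT1 * gT2}) (z : gT1 * gT2) : nat :=
  #|[set p in setX R R | (p.1 != p.2) && (p.1 * p.2^-1 == z)]|.

Definition b2z (b : bool) : int := (nat_of_bool b)%:Z.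

(* Partial direct product difference set; the integer l of the paper is taken
   as a natural number ell, h^l = h ^+ ell and h^(n-l) = (h ^+ ell)^-1. *)
Definition is_PDPDS (h : gT1) (g : gT2) (n m ell : nat) (R : {set gT1 * gT2})
    (k l1 l2 l3 mu1 mu2 : int) : Prop :=
  [/\ #[h] = n /\ #[g] = m, h ^+ ell != 1,
      R \subset setX <[h]> <[g]>,
      (#|R| : int) = k &
      forall z, z \in setX <[h]> <[g]> ->
        ((rrinv_coef R z : int) =
           (k - l1 - l2 + mu1) * b2z (z == 1%g)
         + (l1 - mu1) * b2z (z \in setX <[h]> 1%g)
         + (l2 - mu1) * b2z (z \in setX 1%g <[g]>)
         + mu1 * b2z (z \in setX <[h]> <[g]>)
         + (l3 - l1) * (b2z (z == (h ^+ ell, 1)%g) + b2z (z == ((h ^+ ell)^-1, 1)%g))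
         + (mu2 - mu1) * (\sum_(1 <= j < m)
              (b2z (z == (h ^+ ell, g ^+ j)%g) + b2z (z == ((h ^+ ell)^-1, g ^+ j)%g))))%R].

Definition is_DPDS (h : gT1) (g : gT2) (n m : nat) (R : {set gT1 * gT2})
    (k l1 l2 mu : nat) : Prop :=
  [/\ #[h] = n /\ #[g] = m,
      R \subset setX <[h]> <[g]>,
      #|R| = k &
      forall z, z \in setX <[h]> <[g]> -> z != 1 ->
        diff_count R z =
          (if z.2 == 1 then l1 else if z.1 == 1 then l2 else mu)].
End Defs.

Definition natdist (a b : nat) : nat := (a - b) + (b - a).

From HB Require Import structures.
From mathcomp Require Import all_boot all_order all_algebra all_fingroup.
From mathcomp Require Import cyclic zify ring.
Set Implicit Arguments.
Unset Strict Implicit.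
Unset Printing Implicit Defensive.

Import GRing.Theory.
Local Open Scope group_scope.

(* The coefficient of z = (u, v) in R R^(-1) counts the r in R with z r in R.
   Here R is the disjoint union of the row A = {h^a} x S and the column
   B = S x {h^b}, where S = <h> minus h^b, so this count splits into four
   translation counts: z A meets A only when u = 1, and then in |S| - [v != 1]
   points; symmetrically for z B and B; z A meets B, and z B meets A, in at
   most one point, which exists iff v != 1 and u differs from h^b h^-a,
   resp. h^a h^-b.  These two elements are h^l and h^-l, which produces the
   exceptional coefficients lambda_3 and mu_2; for a = b they are both 1 and
   the count collapses to that of a DPDS. *)

Lemma eq_mulg_id (gT : finGroupType) (x y : gT) : (x * y == y) = (x == 1).
Proof. by rewrite -{2}[y]mul1g (inj_eq (mulIg y)). Qed.

Lemma rrinv_coefE (gT1 gT2 : finGroupType) (R : {set gT1 * gT2}) z :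
  rrinv_coef R z = \sum_(r in R) ((z * r)%g \in R).
Proof.
have inj_shift : injective (fun r : gT1 * gT2 => (z * r, r)) by move=> r s [].
rewrite -(@big_mkcondr _ _ _ _ _ _ _ (fun _ => 1%N)) sum1dep_card.
rewrite /rrinv_coef -(card_imset _ inj_shift).
apply: eq_card => -[p1 p2]; rewrite !inE /=; apply/andP/imsetP => [|[r]].
  by case=> /andP[Rp1 Rp2] /eqP <-; exists p2; rewrite ?inE mulgVK ?Rp2 ?Rp1.
by rewrite inE => /andP[Rr Rzr] [-> ->]; rewrite mulgK Rzr Rr.
Qed.

Lemma rrinv_coef1 (gT1 gT2 : finGroupType) (R : {set gT1 * gT2}) :
  rrinv_coef R 1 = #|R|.
Proof. by rewrite rrinv_coefE -sum1_card; apply: eq_bigr => r Rr; rewrite mul1g Rr. Qed.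

Lemma diff_countE (gT1 gT2 : finGroupType) (R : {set gT1 * gT2}) z :
  z != 1 -> diff_count R z = rrinv_coef R z.
Proof.
move=> nz1; apply: eq_card => p; rewrite !inE.
by case: eqVneq => [->|//]; rewrite mulgV eq_sym (negbTE nz1) !andbF.
Qed.

Lemma in_setU_disjoint_nat (T : finType) (A B : {set T}) x :
  [disjoint A & B] -> (x \in A :|: B) = (x \in A) + (x \in B) :> nat.
Proof.
by move=> dAB; rewrite in_setU; case: (boolP (x \in A)) => // /(disjointFr dAB)->.
Qed.

Lemma sum_eq_mem (T : finType) (A : {pred T}) y :
  \sum_(x in A) (x == y) = (y \in A).
Proof.
have [Ay|nAy] := boolP (y \in A); last first.
  by rewrite big1 // => x Ax; apply/eqP; rewrite eqb0; apply: contraNneq nAy => <-.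
by rewrite (bigD1 y) //= eqxx big1 // => x /andP[_ /negbTE->].
Qed.

Lemma mem_imset_pairl (T U : finType) (c : T) (S : {set U}) p :
  (p \in [set (c, x) | x in S]) = (p.1 == c) && (p.2 \in S).
Proof.
apply/imsetP/andP => [[x Sx ->] //|[/eqP p1c Sp2]].
by exists p.2; rewrite // -p1c -surjective_pairing.
Qed.

Lemma mem_imset_pairr (T U : finType) (c : U) (S : {set T}) p :
  (p \in [set (x, c) | x in S]) = (p.1 \in S) && (p.2 == c).
Proof.
apply/imsetP/andP => [[x Sx ->] //|[Sp1 /eqP p2c]].
by exists p.1; rewrite // -p2c -surjective_pairing.
Qed.

Section Translates.
Variables (gT : finGroupType) (K : {group gT}) (c v : gT).
Hypotheses (Kc : c \in K) (Kv : v \in K).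

Lemma sum_mulg_eq d : d \in K -> \sum_(x in K :\ c) ((v * x)%g == d) = (d != v * c).
Proof.
move=> Kd; rewrite (eq_bigr (fun x => (x == v^-1 * d) : nat)); last first.
  by move=> x _; rewrite (can2_eq (mulKg v) (mulKVg v)).
rewrite sum_eq_mem !inE groupM ?groupV // andbT.
by rewrite (can2_eq (mulKVg v) (mulKg v)).
Qed.

Lemma sum_mulg_in_setD1 :
  \sum_(x in K :\ c) ((v * x)%g \in K :\ c) = (#|K|.-1 - (v != 1%g))%N.
Proof.
rewrite (eq_bigr (fun x => 1 - ((v * x)%g == c))%N); last first.
  by move=> x /setD1P[_ Kx]; rewrite !inE groupM // andbT; case: eqP.
rewrite sumnB => [|x _]; last exact: leq_b1.
by rewrite sum1_card sum_mulg_eq // [c == _]eq_sym eq_mulg_id (cardsD1 c K) Kc.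
Qed.

End Translates.

Section Cross.
Variables (gT : finGroupType) (K : {group gT}) (a c : gT).
Hypotheses (Ka : a \in K) (Kc : c \in K).

Definition cross : {set gT * gT} :=
  [set (a, x) | x in K :\ c] :|: [set (x, c) | x in K :\ c].

Lemma cross_sub : cross \subset setX K K.
Proof.
apply/subsetP => -[x y]; rewrite in_setU mem_imset_pairl mem_imset_pairr !inE /=.
by case/orP => [/andP[/eqP-> /andP[_ ->]] | /andP[/andP[_ ->] /eqP->]]; rewrite ?Ka ?Kc.
Qed.

Lemma rrinv_coef_cross u v : u \in K -> v \in K ->
  rrinv_coef cross (u, v) =
    ((u == 1%g) * (#|K|.-1 - (v != 1%g)) + (v == 1%g) * (#|K|.-1 - (u != 1%g))
     + (v != 1%g) * ((u != (c * a^-1)%g) + (u != (a * c^-1)%g)))%N.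
Proof.
move=> Ku Kv; rewrite rrinv_coefE /cross; set S := K :\ c.
set A := [set (a, x) | x in S]; set B := [set (x, c) | x in S].
have dAB : [disjoint A & B].
  apply/pred0P => -[x y]; rewrite /= mem_imset_pairl mem_imset_pairr /= !inE.
  by case: (y == c); rewrite /= ?andbF.
have memAB p :
    (p \in A :|: B) = ((p.1 == a) && (p.2 \in S)) + ((p.1 \in S) && (p.2 == c)) :> nat.
  by rewrite in_setU_disjoint_nat ?mem_imset_pairl ?mem_imset_pairr.
rewrite (eq_bigl [predU A & B]) => [|r]; last by rewrite !inE.
rewrite bigU // !big_imset /= => [| x y _ _ [] // | x y _ _ [] //].
under eq_bigr do rewrite memAB /= -!mulnb.
under [X in (_ + X)%N]eq_bigr do rewrite memAB /= -!mulnb.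
rewrite !big_split -!big_distrr -!big_distrl /=.
rewrite !sum_mulg_in_setD1 ?sum_mulg_eq // !inE !groupM // !andbT.
rewrite !eq_mulg_id [c == _]eq_sym [a == _]eq_sym eq_mulg_id.
rewrite (can2_eq (mulgK a) (mulgKV a)) (can2_eq (mulgK c) (mulgKV c)).
ring.
Qed.

Lemma card_cross : #|cross| = (2 * #|K| - 2)%N.
Proof.
by rewrite -rrinv_coef1 rrinv_coef_cross ?group1 // eqxx /=; lia.
Qed.

Lemma rrinv_coef_cross_neq u v : a != c -> u \in K -> v \in K ->
  (rrinv_coef cross (u, v) : int) =
    (2 * b2z (u == 1%g) * b2z (v == 1%g) + (#|K|%:Z - 4) * b2z (v == 1%g)
     + (#|K|%:Z - 2) * b2z (u == 1%g) + 2
     - (b2z (u == (c * a^-1)%g) + b2z (u == (a * c^-1)%g)) * b2z (v != 1%g))%R.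
Proof.
move=> neq_ac Ku Kv; rewrite rrinv_coef_cross //.
have K_gt1 : (1 < #|K|)%N by apply/card_gt1P; exists a, c.
(* lia would see the two elaborations of #|K| (via Finite.sort and
   FinGroup.sort) as distinct atoms; [set] identifies them. *)
set n := #|K| in K_gt1 *.
have [-> | _] := eqVneq u 1.
  rewrite !(eq_sym 1) -!eq_mulgV1 [c == a]eq_sym (negbTE neq_ac).
  by case: (v == 1); rewrite /b2z /=; lia.
case: (v == 1); case: (u == c * a^-1); case: (u == a * c^-1); rewrite /b2z /=; lia.
Qed.

End Cross.

Lemma diff_count_cross_diag (gT : finGroupType) (K : {group gT}) c u v :
  c \in K -> u \in K -> v \in K -> (u, v) != 1 ->
  diff_count (cross K c c) (u, v) =
    if v == 1 then (#|K| - 2)%N else if u == 1 then (#|K| - 2)%N else 2%N.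
Proof.
move=> Kc Ku Kv nz1; rewrite diff_countE // rrinv_coef_cross // mulgV.
move: nz1; rewrite xpair_eqE.
by case: eqVneq => _; case: eqVneq => _ //= _; lia.
Qed.

Lemma b2z_andb (b1 b2 : bool) : b2z (b1 && b2) = (b2z b1 * b2z b2)%R.
Proof. by case: b1; case: b2. Qed.

Lemma sum_b2z_pair_expg (gT1 gT2 : finGroupType) (w u : gT1) (g v : gT2) :
  v \in <[g]> ->
  (\sum_(1 <= j < #[g]) b2z ((u, v) == (w, g ^+ j)%g))%R
    = (b2z (u == w) * b2z (v != 1%g))%R.
Proof.
case/cyclePmin => k lt_k_g ->.
rewrite (eq_big_nat _ _ (F2 := fun j => b2z (u == w) * b2z (j == k))%R); last first.
  move=> j /andP[_ lt_j_g]; rewrite xpair_eqE b2z_andb eq_expg_mod_order.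
  by rewrite !modn_small // [k == _]eq_sym.
rewrite -mulr_sumr (eq_bigr (fun j => if j == k then 1 else 0)%R) => [|j _]; last first.
  by case: (j == k).
rewrite -big_mkcond big_nat1_eq lt_k_g andbT -(expg0 g) eq_expg_mod_order.
by rewrite mod0n modn_small //; case: k lt_k_g.
Qed.

Lemma expg_natdist (gT : finGroupType) (g : gT) i j :
  g ^+ natdist i j = g ^+ i * (g ^+ j)^-1 \/ g ^+ natdist i j = g ^+ j * (g ^+ i)^-1.
Proof.
rewrite /natdist; case: (leqP i j) => [le_ij | /ltnW le_ji].
  by right; rewrite (eqP le_ij) add0n -{2}(subnK le_ij) expgD mulgK.
by left; rewrite (eqP le_ji) addn0 -{2}(subnK le_ji) expgD mulgK.
Qed.

Theorem proposition1 (gT : finGroupType) (h : gT) (n a b : nat) :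
  (2 <= n)%N -> #[h] = n -> (a < n)%N -> (b < n)%N ->
  let ell := natdist a b in
  let R : {set gT * gT} :=
    [set (h ^+ a, x) | x in <[h]> :\ h ^+ b]
    :|: [set (x, h ^+ b) | x in <[h]> :\ h ^+ b] in
  (ell != 0%N ->
     is_PDPDS h h n n ell R (2 * n%:Z - 2)%R (n%:Z - 2)%R n%:Z (n%:Z - 2)%R 2%:Z 1%:Z)
  /\ (ell = 0%N -> is_DPDS h h n n R (2 * n - 2) (n - 2) (n - 2) 2).
Proof.
move=> n_ge2 ord_h lt_a_n lt_b_n ell R; subst n.
have Kh i : h ^+ i \in <[h]> := mem_cycle h i.
have R_sub : R \subset setX <[h]> <[h]> := cross_sub (Kh a) (Kh b).
have cardR : #|R| = (2 * #[h] - 2)%N := card_cross (Kh a) (Kh b).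
split=> [ell_neq0 | ell_eq0]; last first.
  have eq_ab : a = b by move: ell_eq0; rewrite /ell /natdist; lia.
  subst b.
  by split=> // -[u v] /setXP[Ku Kv] nz1; apply: diff_count_cross_diag.
have /andP[ell_gt0 ell_lt] : (0 < ell < #[h])%N.
  by move: ell_neq0; rewrite /ell /natdist; lia.
have hell : h ^+ ell != 1.
  by rewrite -order_dvdn; apply: contraTN ell_lt => /(dvdn_leq ell_gt0); rewrite leqNgt.
have neq_ab : h ^+ a != h ^+ b.
  by apply: contraNneq hell; case: (expg_natdist h a b) => -> ->; rewrite mulgV.
split=> //; first by rewrite cardR; lia.
move=> [u v] /setXP[Ku Kv].
rewrite rrinv_coef_cross_neq // big_split /= !sum_b2z_pair_expg //.
rewrite xpair_eqE b2z_andb !in_setX Ku Kv !inE /= -orderE andbT.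
by case: (expg_natdist h a b) => ->; rewrite invMg invgK (_ : b2z true = 1%R) //; ring.
Qed.
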